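(* Let $H\in\mathbb{N}$, let $\{\mathcal{F}_h^k\}_{k\in\mathbb{N},h\in[H]}$ be a filtration that is increasing in the lexicographic order of $(k,h)$ (i.e. $\mathcal{F}_1^1\subseteq\mathcal{F}_2^1\subseteq\dots\subseteq\mathcal{F}_H^1\subseteq\mathcal{F}_1^2\subseteq\cdots$), and let $\{X_h^k\}$ be non-negative random variables with $X_h^k$ being $\mathcal{F}_h^k$-measurable. Let $c>0$ be a constant, and define recursively $J_{H+1}^k:=0$ and $J_h^k:=\big(X_h^k+\mathbb{E}[J_{h+1}^k\mid\mathcal{F}_h^k]\big)\wedge c$ for all $k\in\mathbb{N}$, $h\in[H]$. Then for any $\delta\in(0,1]$, with probability at least $1-\delta$, simultaneously for all $K\in\mathbb{N}$, $$\sum_{k=1}^KJ_1^k\le2\sum_{k=1}^K\sum_{h=1}^HX_h^k+6c\log\frac2\delta.$$ *)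

From HB Require Import structures.
From mathcomp Require Import all_boot all_order all_algebra.
From mathcomp Require Import all_classical all_reals all_analysis.
Set Implicit Arguments. Unset Strict Implicit. Unset Printing Implicit Defensive.
Import Order.TTheory GRing.Theory Num.Theory.
Local Open Scope classical_set_scope.
Local Open Scope ring_scope.

Definition is_sub_sigma_algebra d (T : measurableType d) (G : set (set T)) : Prop :=
  sigma_algebra setT G /\ (forall A, G A -> measurable A).

Definition G_measurable d (T : measurableType d) (R : realType)
    (G : set (set T)) (Y : T -> R) : Prop :=
  forall B : set R, measurable B -> G (Y @^-1` B).

Definition cond_exp_version d (T : measurableType d) (R : realType)
    (P : probability T R) (G : set (set T)) (Z Y : T -> R) : Prop :=
  [/\ G_measurable G Y,
      P.-integrable setT (EFin \o Y) &
      forall A, G A -> (\int[P]_(x in A) (Y x)%:E = \int[P]_(x in A) (Z x)%:E)%E].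

From HB Require Import structures.
From mathcomp Require Import all_boot all_order all_algebra.
From mathcomp Require Import all_classical all_reals all_analysis.
From mathcomp Require Import measurable_realfun ring lra.
Import Order.TTheory GRing.Theory Num.Theory.
Local Open Scope classical_set_scope.
Local Open Scope ring_scope.

(* Put l = 1/(2c) and gap_K = sum_(k <= K) (J_1^k - 2 sum_h X_h^k).  The process exp(l gap_K)
   is a nonnegative supermartingale for the filtration (F_1^(K+1))_K: the one-episode step
   E[exp(l (J_1 - 2 sum_h X_h)) | F_1] <= 1 follows by peeling off h = H, ..., 1 with the
   tower property, using e^(-2lx) (1 - l y) <= 1 - l min(x + y, c) where y is the conditional
   expectation of the next J, and e^a (1 - a) <= 1 at h = 1.  Ville's maximal inequality
   bounds by delta the probability that exp(l gap_K) ever reaches 1/delta; off that event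
   sum_k J_1^k <= 2 sum_(k,h) X_h^k + 2c ln(1/delta), which is stronger than the claim.
   Conditional expectations enter only through E[W Y] = E[W Z] for bounded nonnegative
   G-measurable W, obtained from the defining identity on G-sets by staircase approximation
   of W. *)

Set Implicit Arguments. Unset Strict Implicit. Unset Printing Implicit Defensive.

Section staircase.
Context (R : realType).

Definition staircase (m : nat) (y : R) : R :=
  \sum_(i < m) (if (i.+1)%:R <= y then 1 else 0).

Lemma staircase_full m y : m%:R <= y -> staircase m y = m%:R.
Proof.
elim: m => [|m IH] my; first by rewrite /staircase big_ord0.
rewrite /staircase big_ord_recr /= -/(staircase m y) IH ?my -?natr1//.
by apply: le_trans my; rewrite ler_nat.
Qed.

Lemma staircase_bounds m y : 0 <= y <= m%:R ->
  staircase m y <= y <= staircase m y + 1.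
Proof.
elim: m y => [|m IH] y /andP[y0 ym].
  have -> : y = 0 by apply/le_anti; rewrite ym y0.
  by rewrite /staircase big_ord0 lexx add0r ler01.
rewrite /staircase big_ord_recr /= -/(staircase m y).
have [ylem|mlty] := leP y m%:R.
  have -> : ((m.+1)%:R <= y) = false.
    by apply/negbTE; rewrite -ltNge (le_lt_trans ylem) ?ltr_nat.
  by rewrite addr0; apply: IH; rewrite y0 ylem.
rewrite staircase_full ?(ltW mlty)//.
have [Sm_le_y|] := boolP ((m.+1)%:R <= y).
  have -> : y = m.+1%:R by apply/le_anti; rewrite ym Sm_le_y.
  by rewrite -natr1 lexx /= lerDl ler01.
by rewrite addr0 (ltW mlty) natr1 ym.
Qed.

End staircase.

Lemma norm_indic_le1 (T : Type) (R : numDomainType) (A : set T) x : `|\1_A x : R| <= 1.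
Proof. by rewrite indicE; case: (_ \in _); rewrite ?normr1 ?normr0. Qed.

Section bounded_integrand.
Context d (T : measurableType d) (R : realType) (P : probability T R).
Implicit Types (f g : T -> R) (b : R).

Lemma bounded_fun_le f b : (forall x, `|f x| <= b) -> [bounded f x | x in setT].
Proof.
move=> fb; rewrite /bounded_near; near=> M; move=> x _ /=.
by apply: le_trans (fb x) _; near: M; exact/nbhs_pinfty_ge/num_real.
Unshelve. all: end_near. Qed.

Lemma integrable_bounded f b : measurable_fun setT f ->
  (forall x, `|f x| <= b) -> P.-integrable setT (EFin \o f).
Proof.
move=> mf fb; apply: measurable_bounded_integrable => //; last exact: bounded_fun_le fb.
by rewrite -ge0_fin_numE// fin_num_measure.
Qed.

Lemma integrable_bounded_mul f g b : measurable_fun setT f ->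
  (forall x, `|f x| <= b) -> P.-integrable setT (EFin \o g) ->
  P.-integrable setT (EFin \o (f \* g)).
Proof.
move=> mf fb ig; have := integrableMr measurableT mf (bounded_fun_le fb) ig.
by apply: eq_integrable => // x _.
Qed.

Lemma integrable_indic_mul (A : set T) g : measurable A ->
  P.-integrable setT (EFin \o g) -> P.-integrable setT (EFin \o (\1_A \* g)).
Proof.
by move=> mA; apply: integrable_bounded_mul _ (norm_indic_le1 R A); exact: measurable_indic.
Qed.

Lemma integrable_1B g a : P.-integrable setT (EFin \o g) ->
  P.-integrable setT (EFin \o (fun x => 1 - a * g x)).
Proof.
move=> ig; have := integrableB measurableT (finite_measure_integrable_cst P 1 measurableT)
  (integrableZl measurableT a ig).
by apply: eq_integrable => // x _.
Qed.

Lemma Rintegral_bounded_mul_1B f g b a : measurable_fun setT f ->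
  (forall x, `|f x| <= b) -> P.-integrable setT (EFin \o g) ->
  \int[P]_x (f x * (1 - a * g x)) = \int[P]_x f x - a * \int[P]_x (f x * g x).
Proof.
move=> mf fb ig; have ifg := integrable_bounded_mul mf fb ig.
rewrite -RintegralZl // -RintegralB //; last first.
- exact: integrableZl ifg.
- exact: integrable_bounded mf fb.
by apply: eq_Rintegral => x _; rewrite /= mulrBr mulr1 mulrCA.
Qed.

Lemma norm_Rintegral_bounded_mul f g b : measurable_fun setT f ->
  (forall x, `|f x| <= b) -> P.-integrable setT (EFin \o g) ->
  `|\int[P]_x (f x * g x)| <= b * \int[P]_x `|g x|.
Proof.
move=> mf fb ig; have b0 : 0 <= b by apply: le_trans (fb point).
have ifg := integrable_bounded_mul mf fb ig.
apply: le_trans (le_normr_Rintegral _ ifg) _ => //.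
rewrite -RintegralZl //; last exact: integrable_norm.
apply: le_Rintegral => //.
- exact: integrable_norm ifg.
- exact: integrableZl (integrable_norm ig).
by move=> x _; rewrite normrM ler_wpM2r.
Qed.

End bounded_integrand.

Lemma measurable_sum_nat d (T : measurableType d) (R : realType)
    (f : nat -> T -> R) m n :
  (forall i, (m <= i < n)%N -> measurable_fun setT (f i)) ->
  measurable_fun setT (fun x => \sum_(m <= i < n) f i x).
Proof.
move=> mf.
rewrite (_ : (fun x => \sum_(m <= i < n) f i x) =
  fun x => \sum_(m <= i < n) (if (m <= i < n)%N then f i x else 0)).
  apply: (measurable_sum _ (h := fun i x => if (m <= i < n)%N then f i x else 0)) => i.
  by case: (boolP (m <= i < n)%N) => [/mf|_] //=; exact: measurable_cst.
by apply/funext => x; apply: eq_big_nat => i ->.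
Qed.

Section measurable_wrt.
Context d (T : measurableType d) (R : realType).
Implicit Types (G : set (set T)) (f : T -> R).

(* G-measurability, phrased on the type of the sigma-algebra generated by G so that the
   library's closure lemmas for measurable functions apply. *)
Definition measurable_wrt G f :=
  measurable_fun (setT : set (g_sigma_algebraType G)) (f : g_sigma_algebraType G -> R).

Lemma g_sigma_measurableE G (A : set T) : sigma_algebra setT G ->
  measurable (A : set (g_sigma_algebraType G)) = G A.
Proof. by move=> sG; change (<<s G >> A = G A); rewrite sigma_algebra_id. Qed.

Lemma measurable_wrtP G f : sigma_algebra setT G ->
  G_measurable G f <-> measurable_wrt G f.
Proof.
move=> sG; split => [Gf _ B mB|Gf B mB]; last first.
  by have := Gf measurableT B mB; rewrite setTI g_sigma_measurableE.
by rewrite setTI g_sigma_measurableE //; exact: Gf.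
Qed.

Lemma measurable_wrt_mono G G' f : sigma_algebra setT G -> sigma_algebra setT G' ->
  G `<=` G' -> measurable_wrt G f -> measurable_wrt G' f.
Proof.
move=> sG sG' GG' /(measurable_wrtP _ sG) Gf.
by apply/(measurable_wrtP _ sG') => B mB; exact/GG'/Gf.
Qed.

Lemma measurable_wrt_measurable G f : sigma_algebra setT G -> G `<=` measurable ->
  measurable_wrt G f -> measurable_fun setT f.
Proof.
by move=> sG GT /(measurable_wrtP _ sG) Gf _ B mB; rewrite setTI; exact/GT/Gf.
Qed.

Lemma measurable_wrt_staircase G f b e : sigma_algebra setT G ->
  measurable_wrt G f -> (forall x, 0 <= f x <= b) -> 0 < e ->
  exists m (B : nat -> set T), (forall i, G (B i)) /\
    forall x, `|f x - e * \sum_(i < m) \1_(B i) x| <= e.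
Proof.
move=> sG Gf fb e0; set m := (Num.truncn (b / e)).+1.
pose B i := [set x | (i.+1)%:R <= f x / e].
exists m, B; split => [i|x].
  have Gfe : measurable_wrt G (fun x => f x / e).
    by apply: measurable_funM => //; exact: measurable_cst.
  rewrite -g_sigma_measurableE //.
  have := Gfe measurableT `[(i.+1)%:R, +oo[%classic (measurable_itv _).
  by rewrite setTI; congr measurable; apply/seteqP; split => y /=; rewrite in_itv /= andbT.
have -> : \sum_(i < m) \1_(B i) x = staircase m (f x / e).
  apply: eq_bigr => i _; rewrite indicE /B.
  by case: ifPn => fxe; [rewrite mem_set | rewrite memNset //=; apply/negP].
have /staircase_bounds /andP[sfe fes] : 0 <= f x / e <= m%:R.
  have /andP[fx0 fxb] := fb x; rewrite divr_ge0 ?(ltW e0) //=.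
  by rewrite ler_pdivrMr // (le_trans fxb) // -ler_pdivrMr // ltW // truncnS_gt.
have -> : f x - e * staircase m (f x / e) = e * (f x / e - staircase m (f x / e)).
  by rewrite mulrBr mulrCA divff ?gt_eqF // mulr1.
rewrite normrM gtr0_norm // -[leRHS]mulr1 ler_pM2l // ler_norml; apply/andP; split; lra.
Qed.

End measurable_wrt.

Section version_pullout.
Context d (T : measurableType d) (R : realType) (P : probability T R).
Variables (G : set (set T)) (Y Z : T -> R).
Hypotheses (sG : sigma_algebra setT G) (GT : G `<=` measurable).
Hypotheses (iY : P.-integrable setT (EFin \o Y)) (iZ : P.-integrable setT (EFin \o Z)).
Hypothesis YZ : forall A, G A ->
  (\int[P]_(x in A) (Y x)%:E = \int[P]_(x in A) (Z x)%:E)%E.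

Lemma Rintegral_indic_mul_version (A : set T) : G A ->
  \int[P]_x (\1_A x * Y x) = \int[P]_x (\1_A x * Z x).
Proof.
have indic_mulE f : \int[P]_x (\1_A x * f x) = \int[P]_(x in A) f x.
  rewrite [RHS]Rintegral_mkcond; apply: eq_Rintegral => x _.
  by rewrite /patch indicE; case: ifP => _; rewrite ?mul1r ?mul0r.
by move=> GA; rewrite !indic_mulE /Rintegral YZ.
Qed.

Let measurable_sum_indic (B : nat -> set T) m : (forall i, G (B i)) ->
  measurable_fun setT (fun x => \sum_(i < m) \1_(B i) x : R).
Proof. by move=> GB; apply: measurable_sum => i; exact/measurable_indic/GT. Qed.

Let norm_sum_indic_le (B : nat -> set T) m x : `|\sum_(i < m) \1_(B i) x : R| <= m%:R.
Proof.
apply: le_trans (ler_norm_sum _ _ _) _.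
by rewrite -[m in leRHS]card_ord -sumr_const; apply: ler_sum => i _; exact: norm_indic_le1.
Qed.

Lemma Rintegral_sum_indic_mul_version (B : nat -> set T) m : (forall i, G (B i)) ->
  \int[P]_x ((\sum_(i < m) \1_(B i) x) * Y x) =
  \int[P]_x ((\sum_(i < m) \1_(B i) x) * Z x).
Proof.
move=> GB; elim: m => [|m IH].
  by under eq_Rintegral do rewrite big_ord0 mul0r;
     under [RHS]eq_Rintegral do rewrite big_ord0 mul0r.
have mS := measurable_sum_indic m GB.
have Sm := norm_sum_indic_le B m.
under eq_Rintegral do rewrite big_ord_recr /= mulrDl.
under [RHS]eq_Rintegral do rewrite big_ord_recr /= mulrDl.
rewrite RintegralD //; [|exact: integrable_bounded_mul mS Sm iY
                         |exact/integrable_indic_mul/iY/GT].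
rewrite RintegralD //; [|exact: integrable_bounded_mul mS Sm iZ
                         |exact/integrable_indic_mul/iZ/GT].
by rewrite IH Rintegral_indic_mul_version.
Qed.

Lemma Rintegral_mul_version_near (W : T -> R) b e : measurable_wrt G W ->
  (forall x, 0 <= W x <= b) -> 0 < e ->
  `|\int[P]_x (W x * Y x) - \int[P]_x (W x * Z x)|
    <= e * (\int[P]_x `|Y x| + \int[P]_x `|Z x|).
Proof.
move=> GW Wb e0; have [m [B [GB WB]]] := measurable_wrt_staircase sG GW Wb e0.
have mW := measurable_wrt_measurable sG GT GW.
pose S x := e * \sum_(i < m) \1_(B i) x.
have mS : measurable_fun setT S.
  by apply: measurable_funM; [exact: measurable_cst | exact: measurable_sum_indic].
have S_le x : `|S x| <= e * m%:R by rewrite /S normrM gtr0_norm // ler_pM2l.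
have mWS : measurable_fun setT (W \- S) by exact: measurable_funB.
have splitW g : P.-integrable setT (EFin \o g) ->
    \int[P]_x (W x * g x) = \int[P]_x ((W x - S x) * g x) + \int[P]_x (S x * g x).
  move=> ig; rewrite -RintegralD //; last exact: integrable_bounded_mul mS S_le ig.
    by apply: eq_Rintegral => x _; rewrite -mulrDl subrK.
  exact: integrable_bounded_mul mWS WB ig.
have SYZ : \int[P]_x (S x * Y x) = \int[P]_x (S x * Z x).
  under eq_Rintegral do rewrite /S -mulrA.
  under [RHS]eq_Rintegral do rewrite /S -mulrA.
  rewrite !RintegralZl ?Rintegral_sum_indic_mul_version //.
    exact: integrable_bounded_mul (measurable_sum_indic m GB) (norm_sum_indic_le B m) iZ.
  exact: integrable_bounded_mul (measurable_sum_indic m GB) (norm_sum_indic_le B m) iY.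
rewrite (splitW _ iY) (splitW _ iZ) SYZ opprD addrACA subrr addr0.
apply: le_trans (ler_normB _ _) _; rewrite mulrDr.
by rewrite lerD // norm_Rintegral_bounded_mul.
Qed.

Lemma Rintegral_mul_version (W : T -> R) b : measurable_wrt G W ->
  (forall x, 0 <= W x <= b) -> \int[P]_x (W x * Y x) = \int[P]_x (W x * Z x).
Proof.
move=> GW Wb; set K := \int[P]_x `|Y x| + \int[P]_x `|Z x|.
have K1 : 0 < K + 1 by rewrite ltr_wpDl // addr_ge0 // Rintegral_ge0.
apply/eqP; rewrite -subr_eq0 -normr_le0; apply/ler_addgt0Pr => e e0.
apply: le_trans (Rintegral_mul_version_near GW Wb (divr_gt0 e0 K1)) _.
by rewrite add0r -/K mulrAC ler_pdivrMr // ler_pM2l // lerDl.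
Qed.

End version_pullout.

Section ville.
Context d (T : measurableType d) (R : realType) (P : probability T R).
Variables (G : nat -> set (set T)) (N : nat -> T -> R) (t : R).
Hypotheses (sG : forall k, sigma_algebra setT (G k)) (GT : forall k, G k `<=` measurable).
Hypothesis N_adapted : forall j k, (j <= k)%N -> measurable_wrt (G k) (N j).
Hypotheses (N_ge0 : forall k x, 0 <= N k x) (N_ub : forall k, exists b, forall x, N k x <= b).
Hypothesis N_super : forall k A, G k A ->
  \int[P]_x (N k.+1 x * \1_A x) <= \int[P]_x (N k x * \1_A x).
Hypothesis t0 : 0 < t.

Let mN k : measurable_fun setT (N k).
Proof. exact: measurable_wrt_measurable (sG k) (@GT k) (N_adapted (leqnn k)). Qed.

Let N_bounded k : exists b, forall x, `|N k x| <= b.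
Proof. by have [b Nb] := N_ub k; exists b => x; rewrite ger0_norm. Qed.

Definition crossed K := [set x | exists2 j, (j <= K)%N & t <= N j x].

Lemma crossed_G K : G K (crossed K).
Proof.
rewrite -g_sigma_measurableE //.
have -> : crossed K = \bigcup_(j in `I_K.+1) (N j @^-1` `[t, +oo[%classic).
  apply/seteqP; split => x /= [j jK tj]; exists j => //=; first by rewrite in_itv /= andbT.
  by move: tj; rewrite /preimage /= in_itv /= andbT.
apply: (@bigcup_measurable _ (g_sigma_algebraType (G K))) => j /= jK.
by have := @N_adapted j K jK measurableT _ (measurable_itv `[t, +oo[); rewrite setTI.
Qed.

Let mcrossed K : measurable (crossed K) := GT (crossed_G K).

Fixpoint stopped k : T -> R :=
  if k is k'.+1 then
    fun x => \1_(crossed k') x * stopped k' x + \1_(~` crossed k') x * N k x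
  else N 0.

Lemma stopped_ge0 k x : 0 <= stopped k x.
Proof.
elim: k => [|k IH] /=; first exact: N_ge0.
by rewrite addr_ge0 // mulr_ge0 // indicE ler0n.
Qed.

Lemma stopped_bounded k : exists b, forall x, `|stopped k x| <= b.
Proof.
elim: k => [|k [b IH]] /=; first exact: N_bounded.
have [b' Nb'] := N_bounded k.+1.
exists (b + b') => x; apply: le_trans (ler_normD _ _) _; rewrite lerD //.
  by rewrite normrM -[leRHS]mul1r ler_pM // norm_indic_le1.
by rewrite normrM -[leRHS]mul1r ler_pM // norm_indic_le1.
Qed.

Lemma measurable_stopped k : measurable_fun setT (stopped k).
Proof.
elim: k => [|k IH] /=; first exact: mN.
by apply: measurable_funD; apply: measurable_funM => //;
  apply: measurable_indic => //; exact: measurableC.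
Qed.

Lemma integrable_stopped k : P.-integrable setT (EFin \o stopped k).
Proof.
by have [b Qb] := stopped_bounded k; exact: integrable_bounded (measurable_stopped k) Qb.
Qed.

Lemma stoppedE k x : ~ crossed k x -> stopped k x = N k x.
Proof.
case: k => [//|k] /= ncr.
have ncrk : ~ crossed k x by case=> j jk tj; apply: ncr; exists j => //; exact: leqW.
by rewrite !indicE memNset // mem_set // mul0r add0r mul1r.
Qed.

Lemma crossed_stopped_ge K x : crossed K x -> t <= stopped K x.
Proof.
elim: K => [|K IH] /= crK.
  by case: crK => j; rewrite leqn0 => /eqP ->.
have [crK'|ncrK] := pselect (crossed K x).
  by rewrite !indicE mem_set // memNset //= mul1r mul0r addr0; exact: IH.
rewrite !indicE memNset // mem_set // mul0r add0r mul1r.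
case: crK => j; rewrite leq_eqVlt => /orP[/eqP -> //|jK tj].
by case: ncrK; exists j.
Qed.

Lemma Rintegral_stopped_succ k : \int[P]_x stopped k.+1 x <= \int[P]_x stopped k x.
Proof.
have mNC := measurableC (mcrossed k).
have iQ := integrable_stopped k.
have [bN Nb] := N_bounded k.+1.
have iN := integrable_bounded P (mN k.+1) Nb.
rewrite /= RintegralD //; last 2 first.
- exact: integrable_indic_mul (mcrossed k) iQ.
- exact: integrable_indic_mul mNC iN.
have GnC : G k (~` crossed k).
  by have [_ GC _] := sG k; rewrite -setTD; apply/GC/crossed_G.
have -> : \int[P]_x (\1_(~` crossed k) x * N k.+1 x) =
          \int[P]_x (N k.+1 x * \1_(~` crossed k) x).
  by apply: eq_Rintegral => x _; rewrite mulrC.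
apply: le_trans (lerD (lexx _) (N_super GnC)) _.
have -> : \int[P]_x (N k x * \1_(~` crossed k) x) =
          \int[P]_x (\1_(~` crossed k) x * stopped k x).
  apply: eq_Rintegral => x _; rewrite mulrC indicE.
  by case: (boolP (x \in _)) => [/set_mem/stoppedE ->|_]; rewrite ?mul0r.
rewrite -RintegralD //; last 2 first.
- exact: integrable_indic_mul (mcrossed k) iQ.
- exact: integrable_indic_mul mNC iQ.
rewrite le_eqVlt; apply/orP; left; apply/eqP/eq_Rintegral => x _.
by rewrite -mulrDl !indicE in_setC; case: (x \in _); rewrite /= ?add0r ?addr0 mul1r.
Qed.

Lemma Rintegral_stopped_le k : \int[P]_x stopped k x <= \int[P]_x N 0 x.
Proof.
by elim: k => [//|k IH]; apply: le_trans (Rintegral_stopped_succ k) IH.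
Qed.

Lemma ville_finite K : (P (crossed K) <= (t^-1 * \int[P]_x N 0 x)%:E)%E.
Proof.
have -> : P (crossed K) = (\int[P]_x (\1_(crossed K) x : R))%:E.
  by rewrite /Rintegral integral_indic // setIT fineK // fin_num_measure.
rewrite lee_fin; apply: le_trans (ler_wpM2l _ (Rintegral_stopped_le K)); last first.
  by rewrite invr_ge0 ltW.
rewrite -RintegralZl //; last exact: integrable_stopped.
apply: le_Rintegral => //; [exact: integrable_indic|exact: integrableZl (integrable_stopped K)|].
move=> x _; rewrite indicE; case: (boolP (x \in _)) => [/set_mem/crossed_stopped_ge|_] /=.
  by rewrite ler_pdivlMl // mulr1.
by rewrite mulr_ge0 ?stopped_ge0 // invr_ge0 ltW.
Qed.

Lemma ville : (P (\bigcup_K crossed K) <= (t^-1 * \int[P]_x N 0 x)%:E)%E.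
Proof.
have crossed_nd : nondecreasing_seq crossed.
  by move=> n m nm; apply/subsetPset => x [j jn tj]; exists j => //; exact: leq_trans nm.
have crossed_cvg := nondecreasing_cvg_mu (mu := P) mcrossed (bigcupT_measurable _ mcrossed) crossed_nd.
rewrite -(cvg_lim _ crossed_cvg) //; apply: lime_le; first by apply/cvg_ex; eexists; exact: crossed_cvg.
by apply: nearW => K; exact: ville_finite.
Qed.

End ville.

Section scalar_inequalities.
Context (R : realType).

Lemma expR_mul_1B_le1 (a : R) : expR a * (1 - a) <= 1.
Proof.
apply: le_trans (ler_wpM2l (expR_ge0 a) (expR_ge1Dx (- a))) _.
by rewrite -expRD subrr expR0.
Qed.

Lemma expRN_mul_1B_le_min (c x y : R) : 0 < c -> 0 <= x ->
  expR (- (2 * (2 * c)^-1 * x)) * (1 - (2 * c)^-1 * y)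
  <= 1 - (2 * c)^-1 * Num.min (x + y) c.
Proof.
move=> c0 x0; set l := (2 * c)^-1; set m := Num.min (x + y) c.
have l0 : 0 < l by rewrite invr_gt0 mulr_gt0.
have lc : l * c = 2^-1 by rewrite /l invfM -mulrA mulVf ?gt_eqF // mulr1.
have lm : l * m <= 2^-1 by rewrite -lc ler_wpM2l ?(ltW l0) // /m ge_min lexx orbT.
have e_ge0 := expR_ge0 (- (2 * l * x)).
have [cy|yc] := leP c y.
  have ly : 2^-1 <= l * y by rewrite -lc ler_wpM2l ?(ltW l0).
  have e_le1 : expR (- (2 * l * x)) <= 1.
    by rewrite -[leRHS]expR0 ler_expR oppr_le0 !mulr_ge0 ?(ltW l0).
  set e := expR _ in e_ge0 e_le1 *; nra.
have ym : y <= m by rewrite le_min lerDr x0 ltW.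
set u := m - y.
have ux : u <= x by rewrite lerBlDr ge_min lexx.
have ly : l * y < 2^-1 by rewrite -lc ltr_pM2l.
have one_sub_ly : 1 - l * y <= expR (2 * l * u) * (1 - l * m).
  apply: le_trans (_ : _ <= (1 + 2 * l * u) * (1 - l * m)) _.
    have lu0 : 0 <= l * u by rewrite mulr_ge0 ?subr_ge0 ?(ltW l0).
    have : l * u * 2^-1 <= l * u * (1 - l * m) by rewrite ler_wpM2l //; lra.
    rewrite /u; nra.
  by rewrite ler_wpM2r ?expR_ge1Dx //; lra.
apply: le_trans (ler_wpM2l e_ge0 one_sub_ly) _.
rewrite mulrA -expRD -[leRHS]mul1r; apply: ler_wpM2r; first lra.
rewrite -[leRHS]expR0 ler_expR.
have : 2 * l * u <= 2 * l * x by rewrite ler_wpM2l // mulr_ge0 // ltW.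
lra.
Qed.

Lemma norm_min_addr_le (x y c : R) : 0 <= x -> 0 <= c ->
  `|Num.min (x + y) c| <= `|y| + c.
Proof.
move=> x0 c0; rewrite ler_norml.
have := ler_norm y; have := ler_norm (- y); rewrite normrN.
by have [] := leP (x + y) c => *; apply/andP; split; lra.
Qed.

End scalar_inequalities.

Section supermartingale.
Context d (T : measurableType d) (R : realType) (P : probability T R) (H : nat)
  (F : nat -> nat -> set (set T)) (X J : nat -> nat -> T -> R) (c : R).
Hypothesis F_sub : forall k h, (1 <= k)%N -> (1 <= h <= H)%N -> is_sub_sigma_algebra (F h k).
Hypothesis F_step : forall k h, (1 <= k)%N -> (1 <= h < H)%N -> F h k `<=` F h.+1 k.
Hypothesis F_episode : forall k, (1 <= k)%N -> F H k `<=` F 1%N k.+1.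
Hypothesis X_meas : forall k h, (1 <= k)%N -> (1 <= h <= H)%N -> G_measurable (F h k) (X h k).
Hypothesis X_ge0 : forall k h x, (1 <= k)%N -> (1 <= h <= H)%N -> 0 <= X h k x.
Hypothesis c_gt0 : 0 < c.
Hypothesis J_last : forall k x, (1 <= k)%N -> J H.+1 k x = 0.
Hypothesis J_rec : forall k h, (1 <= k)%N -> (1 <= h <= H)%N ->
  exists Y : T -> R, cond_exp_version P (F h k) (J h.+1 k) Y /\
    forall x, J h k x = Num.min (X h k x + Y x) c.
Hypothesis H_gt0 : (0 < H)%N.

Local Notation l := ((2 * c)^-1).

Let l_gt0 : 0 < l. Proof. by rewrite invr_gt0 mulr_gt0. Qed.

Let h1H : (1 <= 1 <= H)%N. Proof. by rewrite leqnn H_gt0. Qed.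

Lemma F_sigma_algebra k h : (1 <= k)%N -> (1 <= h <= H)%N -> sigma_algebra setT (F h k).
Proof. by move=> k1 hH; case: (F_sub k1 hH). Qed.

Lemma F_measurable k h : (1 <= k)%N -> (1 <= h <= H)%N -> F h k `<=` measurable.
Proof. by move=> k1 hH; case: (F_sub k1 hH). Qed.

Lemma F_mono_step k h h' : (1 <= k)%N -> (1 <= h)%N -> (h <= h' <= H)%N ->
  F h k `<=` F h' k.
Proof.
move=> k1 h1; elim: h' => [|h' IH] /andP[hh' h'H].
  by move: hh'; rewrite leqn0 => /eqP h0; move: h1; rewrite h0.
move: hh'; rewrite leq_eqVlt => /orP[/eqP -> //|]; rewrite ltnS => hh'.
apply: subset_trans (IH _) (F_step k1 _); first by rewrite hh' ltnW.
by rewrite h'H (leq_trans h1 hh').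
Qed.

Lemma F_mono_episode k k' : (1 <= k <= k')%N -> F 1%N k `<=` F 1%N k'.
Proof.
move=> /andP[k1]; elim: k' => [|k' IH]; first by rewrite leqn0 => /eqP k0; move: k1; rewrite k0.
rewrite leq_eqVlt => /orP[/eqP -> //|]; rewrite ltnS => kk'.
apply: subset_trans (IH kk') (subset_trans _ (F_episode (leq_trans k1 kk'))).
by apply: F_mono_step; rewrite ?(leq_trans k1 kk') ?leqnn ?H_gt0.
Qed.

Lemma F_sub_next_episode i k h : (1 <= i <= k)%N -> (1 <= h <= H)%N ->
  F h i `<=` F 1%N k.+1.
Proof.
move=> /andP[i1 ik] /andP[h1 hH].
apply: subset_trans (F_mono_step i1 h1 (_ : h <= H <= H)%N) _; first by rewrite hH leqnn.
apply: subset_trans (F_episode i1) (F_mono_episode _).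
by rewrite ltnS.
Qed.

Lemma X_wrt k h : (1 <= k)%N -> (1 <= h <= H)%N -> measurable_wrt (F h k) (X h k).
Proof. by move=> k1 hH; apply/(measurable_wrtP _ (F_sigma_algebra k1 hH))/X_meas. Qed.

Lemma J_wrt k h : (1 <= k)%N -> (1 <= h <= H)%N -> measurable_wrt (F h k) (J h k).
Proof.
move=> k1 hH; have [Y [[GY _ _] JE]] := J_rec k1 hH.
rewrite (funext JE); apply: measurable_minr; last exact: measurable_cst.
by apply: measurable_funD; [exact: X_wrt | exact/(measurable_wrtP _ (F_sigma_algebra k1 hH))].
Qed.

Lemma J_le k h x : (1 <= k)%N -> (1 <= h <= H.+1)%N -> J h k x <= c.
Proof.
move=> k1 /andP[h1]; rewrite leq_eqVlt => /orP[/eqP ->|]; first by rewrite J_last // ltW.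
rewrite ltnS => hH; have hH' : (1 <= h <= H)%N by rewrite h1.
by have [Y [_ ->]] := J_rec k1 hH'; rewrite ge_min lexx orbT.
Qed.

Lemma integrable_J k h : (1 <= k)%N -> (1 <= h <= H.+1)%N ->
  P.-integrable setT (EFin \o J h k).
Proof.
move=> k1 /andP[h1]; rewrite leq_eqVlt => /orP[/eqP ->|].
  by apply: eq_integrable (integrable0 _ _) => //= x _; rewrite J_last.
rewrite ltnS => hH; have hH' : (1 <= h <= H)%N by rewrite h1.
have [Y [[_ iY _] JE]] := J_rec k1 hH'.
have iYc : P.-integrable setT (EFin \o (fun x => `|Y x| + c)).
  have := integrableD measurableT (integrable_norm iY) (finite_measure_integrable_cst P c measurableT).
  by apply: eq_integrable => // x _.
apply: le_integrable iYc => //.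
  apply/measurable_EFinP.
  exact: measurable_wrt_measurable (F_sigma_algebra k1 hH') (F_measurable k1 hH') (J_wrt k1 hH').
move=> x _ /=; rewrite lee_fin JE [leRHS]ger0_norm ?addr_ge0 ?(ltW c_gt0) //.
exact: norm_min_addr_le (X_ge0 x k1 hH') (ltW c_gt0).
Qed.

Definition gap k x := \sum_(1 <= j < k.+1) (J 1%N j x - 2 * \sum_(1 <= h < H.+1) X h j x).

Definition expgap k x := expR (l * gap k x).

Lemma gapS k x :
  gap k.+1 x = gap k x + (J 1%N k.+1 x - 2 * \sum_(1 <= h < H.+1) X h k.+1 x).
Proof. by rewrite /gap big_nat_recr. Qed.

Lemma gap0 x : gap 0 x = 0.
Proof. by rewrite /gap big_geq. Qed.

Lemma sumX_ge0 k h x : (h <= H.+1)%N -> 0 <= \sum_(1 <= i < h) X i k.+1 x.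
Proof.
move=> hH; rewrite big_nat_cond; apply: sumr_ge0 => i /andP[/andP[i1 ih] _].
by apply: X_ge0; rewrite // i1 -ltnS (leq_trans ih).
Qed.

Lemma gap_le k x : gap k x <= k%:R * c.
Proof.
elim: k => [|k IH]; first by rewrite gap0 mul0r.
rewrite gapS -natr1 mulrDl mul1r.
have := @J_le k.+1 1 x isT isT; have := @sumX_ge0 k H.+1 x (leqnn _); lra.
Qed.

Lemma gap_wrt j k : (j <= k)%N -> measurable_wrt (F 1%N k.+1) (gap j).
Proof.
have sF := F_sigma_algebra (ltn0Sn k) h1H.
elim: j => [|j IH] jk.
  by rewrite (funext gap0); exact: measurable_cst.
rewrite (funext (gapS j)); apply: measurable_funD; first exact: IH (ltnW jk).
have sub h : (1 <= h <= H)%N -> F h j.+1 `<=` F 1%N k.+1.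
  by apply: F_sub_next_episode; rewrite ltn0Sn.
apply: measurable_funB.
  exact: measurable_wrt_mono (F_sigma_algebra _ h1H) sF (sub _ h1H) (J_wrt _ h1H).
apply: measurable_funM; first exact: measurable_cst.
apply: measurable_sum_nat => h hH; rewrite ltnS in hH.
exact: measurable_wrt_mono (F_sigma_algebra _ hH) sF (sub _ hH) (X_wrt _ hH).
Qed.

Lemma expgap_wrt j k : (j <= k)%N -> measurable_wrt (F 1%N k.+1) (expgap j).
Proof.
move=> jk; apply: measurableT_comp; first exact: measurable_expR.
by apply: measurable_funM; [exact: measurable_cst | exact: gap_wrt].
Qed.

Lemma expgap_le k x : expgap k x <= expR (l * (k%:R * c)).
Proof. by rewrite ler_expR ler_wpM2l ?(ltW l_gt0) ?gap_le. Qed.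

Definition partial_expgap k h x :=
  expR (l * gap k x + l * J 1%N k.+1 x - 2 * l * \sum_(1 <= i < h) X i k.+1 x).

(* Interpolates between expgap k.+1 * \1_A (h = H.+1) and a lower bound of expgap k * \1_A
   (h = 1); each step h -> h.+1 is one application of the tower property. *)
Definition bridge k (A : set T) h x :=
  partial_expgap k h x * (1 - l * J h k.+1 x) * \1_A x.

Lemma partial_expgapS k h x : (1 <= h)%N ->
  partial_expgap k h.+1 x = partial_expgap k h x * expR (- (2 * l * X h k.+1 x)).
Proof. by move=> h1; rewrite /partial_expgap big_nat_recr //= -expRD; congr expR; ring. Qed.

Lemma partial_expgap_le k h x : (h <= H.+1)%N ->
  partial_expgap k h x <= expR (l * (k.+1%:R * c)).
Proof.
have kc : k.+1%:R * c = k%:R * c + c by rewrite -[k.+1%:R]natr1 mulrDl mul1r.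
move=> hH; rewrite ler_expR kc mulrDr.
have := l_gt0; have := gap_le k x; have := @J_le k.+1 1 x isT isT.
have := sumX_ge0 k x hH; nra.
Qed.

Lemma partial_expgap_wrt k g h : (1 <= g <= H)%N -> (h <= g.+1)%N ->
  measurable_wrt (F g k.+1) (partial_expgap k h).
Proof.
move=> gH hg; have /andP[g1 gH'] := gH.
have sFg := F_sigma_algebra (ltn0Sn k) gH.
have F1g : F 1%N k.+1 `<=` F g k.+1 := F_mono_step (ltn0Sn k) (leqnn 1) gH.
apply: measurableT_comp; first exact: measurable_expR.
apply: measurable_funB; first apply: measurable_funD.
- apply: measurable_funM; first exact: measurable_cst.
  exact: measurable_wrt_mono (F_sigma_algebra _ h1H) sFg F1g (gap_wrt (leqnn k)).
- apply: measurable_funM; first exact: measurable_cst.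
  exact: measurable_wrt_mono (F_sigma_algebra _ h1H) sFg F1g (J_wrt _ h1H).
apply: measurable_funM; first exact: measurable_cst.
apply: measurable_sum_nat => i /andP[i1 ih].
have iH : (1 <= i <= H)%N by rewrite i1 (leq_trans _ gH') // -ltnS (leq_trans ih).
apply: measurable_wrt_mono (F_sigma_algebra (ltn0Sn k) iH) sFg _ (X_wrt (ltn0Sn k) iH).
by apply: F_mono_step (ltn0Sn k) i1 _; rewrite gH' -ltnS (leq_trans ih).
Qed.

Lemma bridge_last k A x : bridge k A H.+1 x = expgap k.+1 x * \1_A x.
Proof.
rewrite /bridge J_last // mulr0 subr0 mulr1 /expgap gapS /partial_expgap.
by congr (expR _ * _); ring.
Qed.

Lemma bridge_first_le k A x : bridge k A 1%N x <= expgap k x * \1_A x.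
Proof.
rewrite /bridge /partial_expgap big_geq // mulr0 subr0 expRD -/(expgap k x).
apply: ler_wpM2r; first by rewrite indicE ler0n.
by rewrite -mulrA -[leRHS]mulr1 ler_wpM2l ?expR_ge0 ?expR_mul_1B_le1.
Qed.

Lemma partial_expgap_indic_bounds k A h x : (h <= H.+1)%N ->
  0 <= partial_expgap k h x * \1_A x <= expR (l * (k.+1%:R * c)).
Proof.
move=> hH; rewrite mulr_ge0 ?expR_ge0 ?indicE ?ler0n //= -[leRHS]mulr1.
by rewrite ler_pM ?expR_ge0 ?partial_expgap_le // lern1 leq_b1.
Qed.

Lemma integrable_bridge k A h : measurable A -> (1 <= h <= H.+1)%N ->
  P.-integrable setT (EFin \o bridge k A h).
Proof.
move=> mA hH; have /andP[_ hH'] := hH.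
have hH1 : (1 <= H <= H)%N by rewrite H_gt0 leqnn.
have mC : measurable_fun setT (fun x => partial_expgap k h x * \1_A x).
  apply: measurable_funM; last exact: measurable_indic.
  exact: measurable_wrt_measurable (F_sigma_algebra (ltn0Sn k) hH1)
    (F_measurable (ltn0Sn k) hH1) (@partial_expgap_wrt k H h hH1 hH').
have C_le x : `|partial_expgap k h x * \1_A x| <= expR (l * (k.+1%:R * c)).
  by have /andP[C0 Cb] := partial_expgap_indic_bounds k A x hH'; rewrite ger0_norm.
have := integrable_bounded_mul mC C_le (integrable_1B l (integrable_J (ltn0Sn k) hH)).
by apply: eq_integrable => // x _ /=; rewrite /bridge mulrAC.
Qed.

Lemma bridge_succ_le k A h (Y : T -> R) x : (1 <= h <= H)%N ->
  J h k.+1 x = Num.min (X h k.+1 x + Y x) c ->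
  partial_expgap k h.+1 x * \1_A x * (1 - l * Y x) <= bridge k A h x.
Proof.
move=> hH JE; rewrite /bridge JE partial_expgapS; last by case/andP: hH.
have := expRN_mul_1B_le_min (Y x) c_gt0 (X_ge0 x (ltn0Sn k) hH).
have : 0 <= partial_expgap k h x * \1_A x by rewrite mulr_ge0 ?expR_ge0 ?indicE ?ler0n.
set C := partial_expgap _ _ _; set E := expR _; set I := \1_A x; nra.
Qed.

Lemma Rintegral_bridge_step k A h : F 1%N k.+1 A -> (1 <= h <= H)%N ->
  \int[P]_x bridge k A h.+1 x <= \int[P]_x bridge k A h x.
Proof.
move=> FA hH; have /andP[h1 hH'] := hH.
have hH1' : (h.+1 <= H.+1)%N by rewrite ltnS.
have hH1 : (1 <= h.+1 <= H.+1)%N by rewrite hH1'.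
have [Y [[_ iY YJ] JE]] := J_rec (ltn0Sn k) hH.
have sF := F_sigma_algebra (ltn0Sn k) hH.
have FT := F_measurable (ltn0Sn k) hH.
have FhA : F h k.+1 A := F_mono_step (ltn0Sn k) (leqnn 1) hH FA.
pose W x := partial_expgap k h.+1 x * \1_A x.
have GW : measurable_wrt (F h k.+1) W.
  apply: measurable_funM; first exact: partial_expgap_wrt.
  by apply: measurable_indic; rewrite g_sigma_measurableE.
have mW := measurable_wrt_measurable sF FT GW.
have W_bnd x := partial_expgap_indic_bounds k A x hH1'.
have W_le x : `|W x| <= expR (l * (k.+1%:R * c)).
  by have /andP[W0 Wb] := W_bnd x; rewrite ger0_norm.
have -> : \int[P]_x bridge k A h.+1 x = \int[P]_x (W x * (1 - l * J h.+1 k.+1 x)).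
  by apply: eq_Rintegral => x _; rewrite /bridge /W mulrAC.
rewrite (Rintegral_bounded_mul_1B _ mW W_le (integrable_J (ltn0Sn k) hH1)).
rewrite -(Rintegral_mul_version sF FT iY (integrable_J (ltn0Sn k) hH1) YJ GW W_bnd).
rewrite -(Rintegral_bounded_mul_1B _ mW W_le iY).
apply: le_Rintegral => //.
- exact: integrable_bounded_mul mW W_le (integrable_1B l iY).
- by apply: integrable_bridge; [exact: FT | rewrite h1 leqW].
by move=> x _; exact: bridge_succ_le.
Qed.

Lemma Rintegral_bridge_le_first k A h : F 1%N k.+1 A -> (1 <= h <= H.+1)%N ->
  \int[P]_x bridge k A h x <= \int[P]_x bridge k A 1%N x.
Proof.
move=> FA; elim: h => [//|h IH] /andP[_ hH].
have [->//|h_gt0] := posnP h.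
apply: le_trans (IH _); last by rewrite h_gt0 ltnW.
by apply: Rintegral_bridge_step; rewrite // h_gt0 -ltnS.
Qed.

Lemma expgap_supermartingale k A : F 1%N k.+1 A ->
  \int[P]_x (expgap k.+1 x * \1_A x) <= \int[P]_x (expgap k x * \1_A x).
Proof.
move=> FA; have mA := F_measurable (ltn0Sn k) h1H FA.
under eq_Rintegral do rewrite -bridge_last.
apply: le_trans (Rintegral_bridge_le_first FA _) _; first by rewrite leqnn.
apply: le_Rintegral => //; first exact: integrable_bridge.
  have mN : measurable_fun setT (fun x => expgap k x * \1_A x).
    apply: measurable_funM; last exact: measurable_indic.
    exact: measurable_wrt_measurable (F_sigma_algebra _ h1H) (F_measurable _ h1H) (expgap_wrt (leqnn k)).
  apply: (integrable_bounded P mN (b := expR (l * (k%:R * c)))) => x.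
  rewrite normrM ger0_norm ?expR_ge0 // -[leRHS]mulr1.
  by rewrite ler_pM ?expR_ge0 ?norm_indic_le1 ?expgap_le.
by move=> x _; exact: bridge_first_le.
Qed.

Lemma sum_J_le_of_expgap_lt K x (delta : R) : 0 < delta <= 1 -> expgap K x < delta^-1 ->
  \sum_(1 <= k < K.+1) J 1%N k x
  <= 2 * \sum_(1 <= k < K.+1) \sum_(1 <= h < H.+1) X h k x + 6 * c * ln (2 / delta).
Proof.
move=> /andP[d0 d1]; rewrite /expgap -ltr_ln ?posrE ?expR_gt0 ?invr_gt0 // expRK.
rewrite /gap sumrB -mulr_sumr mulrC ltr_pdivrMr ?mulr_gt0 //.
have lnd0 : 0 <= ln delta^-1 by rewrite ln_ge0 // invf_ge1.
have ln20 : 0 <= ln (2 : R) by rewrite ln_ge0 // ler1n.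
rewrite lnM ?posrE ?invr_gt0 //.
have := mulr_ge0 (ltW c_gt0) lnd0; have := mulr_ge0 (ltW c_gt0) ln20; nra.
Qed.

Lemma expgap_concentration (delta : R) : 0 < delta <= 1 ->
  exists E : set T, [/\ measurable E, ((1 - delta)%:E <= P E)%E &
    forall x, E x -> forall K : nat,
      \sum_(1 <= k < K.+1) J 1%N k x
      <= 2 * \sum_(1 <= k < K.+1) \sum_(1 <= h < H.+1) X h k x
         + 6 * c * ln (2 / delta)].
Proof.
move=> /[dup] /andP[d0 d1] hd.
have sF k := F_sigma_algebra (ltn0Sn k) h1H.
have FT k := F_measurable (ltn0Sn k) h1H.
have expgap_ub k : exists b, forall x, expgap k x <= b.
  by exists (expR (l * (k%:R * c))) => x; exact: expgap_le.
have t0 : 0 < delta^-1 by rewrite invr_gt0.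
have Ville := ville sF FT expgap_wrt (fun k x => expR_ge0 _) expgap_ub expgap_supermartingale t0.
have mU := bigcupT_measurable _ (fun K => FT K _ (crossed_G delta^-1 sF expgap_wrt K)).
exists (~` \bigcup_K crossed expgap delta^-1 K); split; first exact: measurableC.
  rewrite probability_setC //; move: Ville.
  have -> : \int[P]_x expgap 0 x = 1.
    under eq_Rintegral do rewrite /expgap gap0 mulr0 expR0.
    by rewrite Rintegral_cst // mul1r (_ : fine (P setT) = 1) // probability_setT.
  rewrite invrK mulr1.
  rewrite -(fineK (fin_num_measure P _ mU)) -EFinB !lee_fin; lra.
move=> x /= notU K; apply: sum_J_le_of_expgap_lt => //.
by rewrite ltNge; apply/negP => Kx; apply: notU; exists K => //; exists K.
Qed.

End supermartingale.

Theorem lemma2 (d : measure_display) (T : measurableType d) (R : realType)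
  (P : probability T R) (H : nat)
  (F : nat -> nat -> set (set T)) (X J : nat -> nat -> T -> R) (c delta : R) :
  (forall k h, (1 <= k)%N -> (1 <= h <= H)%N -> is_sub_sigma_algebra (F h k)) ->
  (forall k h, (1 <= k)%N -> (1 <= h < H)%N -> F h k `<=` F h.+1 k) ->
  (forall k, (1 <= k)%N -> F H k `<=` F 1%N k.+1) ->
  (forall k h, (1 <= k)%N -> (1 <= h <= H)%N -> G_measurable (F h k) (X h k)) ->
  (forall k h x, (1 <= k)%N -> (1 <= h <= H)%N -> 0 <= X h k x) ->
  0 < c ->
  (forall k x, (1 <= k)%N -> J H.+1 k x = 0) ->
  (forall k h, (1 <= k)%N -> (1 <= h <= H)%N ->
     exists Y : T -> R, cond_exp_version P (F h k) (J h.+1 k) Y /\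
       forall x, J h k x = Num.min (X h k x + Y x) c) ->
  0 < delta <= 1 ->
  exists E : set T, [/\ measurable E, ((1 - delta)%:E <= P E)%E &
    forall x, E x -> forall K : nat,
      \sum_(1 <= k < K.+1) J 1%N k x
      <= 2 * \sum_(1 <= k < K.+1) \sum_(1 <= h < H.+1) X h k x
         + 6 * c * ln (2 / delta)].
Proof.
move=> F_sub F_step F_episode X_meas X_ge0 c_gt0 J_last J_rec /[dup] hd /andP[d0 d1].
have [H0|H_gt0] := posnP H; last first.
  by have := expgap_concentration F_sub F_step F_episode X_meas X_ge0 c_gt0 J_last J_rec H_gt0 hd.
exists setT; split => // [|x _ K].
  by rewrite (_ : P setT = 1%E) ?probability_setT // lee_fin gerBl ltW.
have -> : \sum_(1 <= k < K.+1) J 1%N k x = 0.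
  by rewrite big_nat_cond big1 // => k /andP[/andP[k1 _] _]; rewrite -H0 J_last.
have -> : \sum_(1 <= k < K.+1) \sum_(1 <= h < H.+1) X h k x = 0.
  by rewrite big1 // => k _; rewrite H0 big_geq.
rewrite mulr0 add0r !mulr_ge0 ?(ltW c_gt0) // ln_ge0 // ler_pdivlMr // mul1r.
by rewrite (le_trans d1) ?ler1n.
Qed.
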